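(* Let $\mathrm{K}=\begin{bmatrix}A&B\\C&D\end{bmatrix}$ with $A\in\mathbb{C}^{n\times n}$, $B\in\mathbb{C}^{n\times m}$, $C\in\mathbb{C}^{m\times n}$, $D\in\mathbb{C}^{m\times m}$, $m\ge 3$, and let $\Lambda=\{\lambda_1,\lambda_2,\lambda_3\}$ be three distinct complex numbers none of which is an eigenvalue of $A$. If $X\in\mathbb{C}^{m\times m}$ is such that the spectrum of $\mathrm{K}_X=\begin{bmatrix}A&B\\C&X\end{bmatrix}$ contains $\Lambda$, then for every $\gamma=(\gamma_{12},\gamma_{13},\gamma_{23})\in\mathbb{C}^3$, \[\|X-D\|_2\ \ge\ s_{3m-2}\big(\mathcal{S}_3(D,\gamma)\big).\]
   Context: $s_j(\cdot)$ denotes the $j$-th largest singular value, $\|\cdot\|_2$ the spectral norm. Write $A_i^{-1}=(A-\lambda_iI_n)^{-1}$, $D_i=D-\lambda_iI_m$, and $M_i=D_i-CA_i^{-1}B$, $N_{ij}=I_m+CA_i^{-1}A_j^{-1}B$, $P_{123}=CA_1^{-1}A_2^{-1}A_3^{-1}B$. Then \[\mathcal{S}_3(D,\gamma)=\begin{bmatrix}M_1&\gamma_{12}N_{12}&\gamma_{13}N_{13}-\gamma_{12}\gamma_{23}P_{123}\\0&M_2&\gamma_{23}N_{23}\\0&0&M_3\end{bmatrix}\in\mathbb{C}^{3m\times 3m}.\] *)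

From HB Require Import structures.
From mathcomp Require Import all_boot all_order all_algebra all_field.
From mathcomp Require Import reals complex.
Set Implicit Arguments. Unset Strict Implicit. Unset Printing Implicit Defensive.
Import Order.TTheory GRing.Theory Num.Theory.
Local Open Scope ring_scope.

Section Generic.
Variable F : numClosedFieldType.

Definition adjmx (p q : nat) (M : 'M[F]_(p, q)) : 'M[F]_(q, p) :=
  map_mx (@Num.conj F) M^T.

Definition gram_eigs (p q : nat) (M : 'M[F]_(p, q)) : seq F :=
  sval (closed_field_poly_normal (char_poly (adjmx M *m M))).

Definition sq_svals (p q : nat) (M : 'M[F]_(p, q)) : seq F :=
  sort (fun x y : F => y <= x) (gram_eigs M).

(* s_j(M), 1-indexed: j-th largest singular value *)
Definition sval_j (j : nat) (p q : nat) (M : 'M[F]_(p, q)) : F :=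
  sqrtC (nth 0 (sq_svals M) j.-1).

Definition spec_norm (p q : nat) (M : 'M[F]_(p, q)) : F := sval_j 1 M.

End Generic.

Section S3.
Variable F : numClosedFieldType.
Variables (n m : nat) (A : 'M[F]_n) (B : 'M[F]_(n, m))
  (C : 'M[F]_(m, n)) (D : 'M[F]_m).

Definition Ainv (l : F) : 'M[F]_n := invmx (A - l%:M).
Definition Mi (l : F) : 'M[F]_m := (D - l%:M) - C *m Ainv l *m B.
Definition Nij (li lj : F) : 'M[F]_m := 1%:M + C *m Ainv li *m Ainv lj *m B.
Definition P123 (l1 l2 l3 : F) : 'M[F]_m :=
  C *m Ainv l1 *m Ainv l2 *m Ainv l3 *m B.

Definition S3 (l1 l2 l3 g12 g13 g23 : F) : 'M[F]_(m + (m + m)) :=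
  block_mx (Mi l1)
           (row_mx (g12 *: Nij l1 l2) (g13 *: Nij l1 l3 - (g12 * g23) *: P123 l1 l2 l3))
           0
           (block_mx (Mi l2) (g23 *: Nij l2 l3) 0 (Mi l3)).
End S3.

From HB Require Import structures.
From mathcomp Require Import all_boot all_order all_algebra all_field.
From mathcomp Require Import reals complex.
From mathcomp Require Import ring zify.
Set Implicit Arguments. Unset Strict Implicit. Unset Printing Implicit Defensive.
Import Order.TTheory GRing.Theory Num.Theory.
Local Open Scope ring_scope.

(* If l is an eigenvalue of [block_mx A B C X] but not of A, the Schur
   complement [Mi A B C X l] is singular. By the resolvent identity, every
   off-diagonal block of S_3(X, gamma) is a combination of the Schur complements,
   so S_3(X, gamma) = U diag(M_1, M_2, M_3) V has rank at most 3m - 3.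
   As S_3(X, gamma) = S_3(D, gamma) + I_3 (x) (X - D), it remains to see that
   rank (S + E) <= k forces s_(k+1)(S) <= ||E||_2: the span of the right singular
   vectors of S for its k+1 largest singular values meets the kernel of S + E,
   and on a unit vector x there, s_(k+1)(S) <= ||S x|| = ||E x|| <= ||E||_2. *)

Section SchurComplements.
Variable F : numClosedFieldType.
Variables (n m : nat) (A : 'M[F]_n) (B : 'M[F]_(n, m)) (C : 'M[F]_(m, n)).

Lemma unitmx_sub_scalar (l : F) : ~~ eigenvalue A l -> A - l%:M \in unitmx.
Proof. by move/negPn; rewrite -row_free_unit -kermx_eq0. Qed.

Lemma Mi_rank_lt (X : 'M[F]_m) l : ~~ eigenvalue A l ->
  eigenvalue (block_mx A B C X) l -> (\rank (Mi A B C X l) < m)%N.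
Proof.
move=> /unitmx_sub_scalar Al_unit /eigenvalueP [v]; rewrite -[v]hsubmxK.
set v1 := lsubmx v; set v2 := rsubmx v.
rewrite mul_row_block scale_row_mx => /eq_row_mx [eq1 eq2] v_neq0.
have v1E : v1 = - (v2 *m C *m Ainv A l).
  rewrite -[v1](mulmxK Al_unit) -mulNmx; congr (_ *m _).
  by rewrite mulmxBr mul_mx_scalar -eq1 opprD addNKr.
have v2M : v2 *m Mi A B C X l = 0.
  rewrite /Mi !mulmxBr mul_mx_scalar -eq2 !mulmxA -mulNmx -v1E.
  by rewrite [LHS]addrC addrA subrr.
have v2_neq0 : v2 != 0.
  by apply: contraNneq v_neq0 => v20; rewrite v1E v20 !mul0mx oppr0 row_mx0.
rewrite ltn_neqAle rank_leq_row andbT; apply: contraNneq v2_neq0 => full.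
by rewrite -(mulmx_free_eq0 _ (_ : row_free (Mi A B C X l))) ?v2M // /row_free full.
Qed.

Lemma resolvent_eq l1 l2 : A - l1%:M \in unitmx -> A - l2%:M \in unitmx ->
  Ainv A l1 - Ainv A l2 = (l1 - l2) *: (Ainv A l1 *m Ainv A l2).
Proof.
move=> A1 A2; have -> : Ainv A l1 - Ainv A l2 =
    Ainv A l1 *m ((A - l2%:M) - (A - l1%:M)) *m Ainv A l2.
  by rewrite mulmxBr mulmxBl mulmxK // mulVmx // mul1mx.
have -> : A - l2%:M - (A - l1%:M) = (l1 - l2)%:M.
  by rewrite opprB addrC addrA subrK raddfB.
by rewrite mul_mx_scalar scalemxAl.
Qed.

Lemma Mi_sub (X : 'M[F]_m) l1 l2 :
  A - l1%:M \in unitmx -> A - l2%:M \in unitmx ->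
  Mi A B C X l1 - Mi A B C X l2 = (l2 - l1) *: Nij A B C l1 l2.
Proof.
move=> A1 A2; have CAB : C *m Ainv A l1 *m B =
    (l1 - l2) *: (C *m Ainv A l1 *m Ainv A l2 *m B) + C *m Ainv A l2 *m B.
  apply/eqP; rewrite -subr_eq -mulmxBl -mulmxBr resolvent_eq //.
  by rewrite -scalemxAr -scalemxAl !mulmxA.
by rewrite /Mi /Nij CAB; apply/matrixP => i j; rewrite !mxE; ring.
Qed.

Lemma Nij_sub l1 l2 l3 : A - l2%:M \in unitmx -> A - l3%:M \in unitmx ->
  Nij A B C l1 l2 - Nij A B C l1 l3 = (l2 - l3) *: P123 A B C l1 l2 l3.
Proof.
move=> A2 A3; rewrite /Nij /P123 opprD addrACA subrr add0r -mulmxBl -mulmxBr.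
by rewrite resolvent_eq // -!scalemxAr -scalemxAl !mulmxA.
Qed.

Lemma S3_factor (X : 'M[F]_m) l1 l2 l3 g12 g13 g23 :
  A - l1%:M \in unitmx -> A - l2%:M \in unitmx -> A - l3%:M \in unitmx ->
  l1 != l2 -> l1 != l3 -> l2 != l3 ->
  exists U V : 'M[F]_(m + (m + m)), S3 A B C X l1 l2 l3 g12 g13 g23 =
    U *m block_mx (Mi A B C X l1) 0 0
           (block_mx (Mi A B C X l2) 0 0 (Mi A B C X l3)) *m V.
Proof.
move=> A1 A2 A3 l12 l13 l23.
set k12 := (l2 - l1)^-1; set k13 := (l3 - l1)^-1; set k23 := (l3 - l2)^-1.
pose utri a b e : 'M[F]_(m + (m + m)) :=
  block_mx 1%:M (row_mx a%:M b%:M) 0 (block_mx 1%:M e%:M 0 1%:M).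
exists (utri (- (g12 * k12)) (- g13 * k13 + g12 * g23 * k23 * k13) (- (g23 * k23))).
exists (utri (g12 * k12) (g13 * k13 + g12 * g23 * k23 * (k12 - k13)) (g23 * k23)).
have unscale (c : F) (N Y : 'M[F]_m) : c != 0 -> Y = c *: N -> N = c^-1 *: Y.
  by move=> c0 ->; rewrite scalerA mulVf // scale1r.
have d12 : l2 - l1 != 0 by rewrite subr_eq0 eq_sym.
have d13 : l3 - l1 != 0 by rewrite subr_eq0 eq_sym.
have d23 : l3 - l2 != 0 by rewrite subr_eq0 eq_sym.
have d32 : l2 - l3 != 0 by rewrite subr_eq0.
have k32 : (l2 - l3)^-1 = - k23 by rewrite -invrN opprB.
rewrite /S3 (unscale _ _ _ d32 (Nij_sub l1 A2 A3)) k32.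
rewrite (unscale _ _ _ d12 (Mi_sub X A1 A2)).
rewrite (unscale _ _ _ d13 (Mi_sub X A1 A3)).
rewrite (unscale _ _ _ d23 (Mi_sub X A2 A3)) -/k12 -/k13 -/k23.
rewrite /utri !(mulmx_block, mul_row_block, mul_mx_row, mul0mx, mulmx0, mul1mx,
  mulmx1, add0r, addr0) add_row_mx !(mul_mx_scalar, mul_scalar_mx).
congr block_mx; first congr row_mx; try congr block_mx;
  by apply/matrixP => i j; rewrite !mxE; ring.
Qed.

Lemma S3_rank_le (X : 'M[F]_m) l1 l2 l3 g12 g13 g23 :
  l1 != l2 -> l1 != l3 -> l2 != l3 ->
  ~~ eigenvalue A l1 -> ~~ eigenvalue A l2 -> ~~ eigenvalue A l3 ->
  eigenvalue (block_mx A B C X) l1 -> eigenvalue (block_mx A B C X) l2 ->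
  eigenvalue (block_mx A B C X) l3 ->
  (\rank (S3 A B C X l1 l2 l3 g12 g13 g23) <= 3 * m - 3)%N.
Proof.
move=> l12 l13 l23 nA1 nA2 nA3 eK1 eK2 eK3.
have [U [V ->]] := S3_factor X g12 g13 g23 (unitmx_sub_scalar nA1)
  (unitmx_sub_scalar nA2) (unitmx_sub_scalar nA3) l12 l13 l23.
apply: leq_trans (mxrankM_maxl _ _) _; apply: leq_trans (mxrankM_maxr _ _) _.
rewrite !rank_diag_block_mx.
have := Mi_rank_lt nA1 eK1; have := Mi_rank_lt nA2 eK2.
by have := Mi_rank_lt nA3 eK3; lia.
Qed.

Lemma S3_shift (D X : 'M[F]_m) l1 l2 l3 g12 g13 g23 :
  S3 A B C X l1 l2 l3 g12 g13 g23 = S3 A B C D l1 l2 l3 g12 g13 g23 +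
    block_mx (X - D) 0 0 (block_mx (X - D) 0 0 (X - D)).
Proof.
have Mi_shift l : Mi A B C X l = Mi A B C D l + (X - D).
  by apply/matrixP => i j; rewrite !mxE; ring.
by rewrite /S3 !add_block_mx !addr0 -!Mi_shift.
Qed.
End SchurComplements.

Section SortedNonincreasing.
Variables (disp : Order.disp_t) (T : porderType disp) (x0 : T) (s : seq T).
Hypothesis s_sorted : sorted >=%O s.

Lemma sorted_ge_le_head x : x \in s -> (x <= nth x0 s 0)%O.
Proof.
move=> /(nthP x0) [j js <-].
by apply: (sorted_leq_nth ge_trans ge_refl) => //; rewrite inE (leq_ltn_trans _ js).
Qed.

Lemma sorted_ge_count_nth k : (k < size s)%N -> (k < count (>= nth x0 s k)%O s)%N.
Proof.
move=> ks; rewrite -[s in count _ s](cat_take_drop k.+1) count_cat.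
have all_ge : all (>= nth x0 s k)%O (take k.+1 s).
  apply/(all_nthP x0) => j; rewrite size_takel // => jk; rewrite nth_take //.
  by apply: (sorted_leq_nth ge_trans ge_refl) => //; rewrite inE (leq_trans jk).
by move: all_ge; rewrite all_count size_takel // => /eqP->; exact: leq_addr.
Qed.
End SortedNonincreasing.

Lemma char_poly_conj (R : comNzRingType) q (Q P D : 'M[R]_q) : Q *m P = 1%:M ->
  char_poly (Q *m D *m P) = char_poly D.
Proof.
move=> QP; rewrite /char_poly /char_poly_mx !map_mxM.
set Q' := map_mx polyC Q; set P' := map_mx polyC P.
have QP' : Q' *m P' = 1%:M by rewrite -map_mxM QP map_mx1.
have {1}-> : ('X%:M : 'M[{poly R}]_q) = Q' *m 'X%:M *m P'.
  by rewrite scalar_mxC -mulmxA QP' mulmx1.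
by rewrite -mulmxBl -mulmxBr !det_mulmx mulrAC -det_mulmx QP' det1 mul1r.
Qed.

Lemma capmx_neq0 (F : fieldType) p1 p2 q (U : 'M[F]_(p1, q)) (V : 'M[F]_(p2, q)) :
  (q < \rank U + \rank V)%N -> (U :&: V)%MS != 0.
Proof.
rewrite -mxrank_sum_cap -mxrank_eq0 => lt_q; apply: contraTneq lt_q => ->.
by rewrite addn0 -leqNgt rank_leq_col.
Qed.

Local Open Scope sesquilinear_scope.

Section Adjoint.
Variable F : numClosedFieldType.

Lemma adjmxE p q (M : 'M[F]_(p, q)) : adjmx M = M ^t*.
Proof. by []. Qed.

Lemma trmxC_mul p q r (M : 'M[F]_(p, q)) (N : 'M[F]_(q, r)) :
  (M *m N) ^t* = N ^t* *m M ^t*.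
Proof. by rewrite trmx_mul map_mxM. Qed.

Lemma mxrank_trmxC p q (M : 'M[F]_(p, q)) : \rank (M ^t*) = \rank M.
Proof. by rewrite mxrank_map mxrank_tr. Qed.

Lemma dotmxN p (u : 'rV[F]_p) : dotmx (- u) (- u) = dotmx u u.
Proof. by rewrite !dotmxE !raddfN /= mulNmx opprK. Qed.

Lemma dotmx_sum p (u : 'rV[F]_p) : dotmx u u = \sum_i u 0 i * (u 0 i)^*.
Proof. by rewrite dotmxE mxE; apply: eq_bigr => i _; rewrite !mxE. Qed.

Lemma dotmx_ge0 p (u : 'rV[F]_p) : 0 <= dotmx u u.
Proof. exact: dnorm_ge0. Qed.

Lemma dotmx_gt0 p (u : 'rV[F]_p) : (0 < dotmx u u) = (u != 0).
Proof. exact: dnorm_gt0. Qed.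

Lemma dotmx_row_mx p1 p2 (u : 'rV[F]_p1) (v : 'rV[F]_p2) :
  dotmx (row_mx u v) (row_mx u v) = dotmx u u + dotmx v v.
Proof. by rewrite !dotmxE tr_row_mx map_col_mx mul_row_col mxE. Qed.

Lemma dotmx_unitary p (P : 'M[F]_p) (u : 'rV[F]_p) : P \is unitarymx ->
  dotmx (u *m P) (u *m P) = dotmx u u.
Proof. by move=> P_unitary; rewrite !dotmxE trmxC_mul mulmxA mulmxtVK. Qed.

Lemma mul_trmxC_unitary p (P : 'M[F]_p) : P \is unitarymx -> P ^t* *m P = 1%:M.
Proof. by move=> P_unitary; rewrite -invmx_unitary // mulVmx ?unitarymx_unit. Qed.

Lemma rowsub_unitarymx p q r (f : 'I_p -> 'I_q) (P : 'M[F]_(q, r)) :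
  injective f -> P \is unitarymx -> rowsub f P \is unitarymx.
Proof.
move=> f_inj /row_unitarymxP P_unitary; apply/row_unitarymxP => i j.
by rewrite !row_rowsub P_unitary (inj_eq f_inj).
Qed.

(* [||E x||^2 <= c ||x||^2] for all x, written for the rows [u = x^*]. *)
Definition sq_opnorm_le p q (E : 'M[F]_(p, q)) (c : F) :=
  forall u : 'rV[F]_q, dotmx (u *m E ^t*) (u *m E ^t*) <= c * dotmx u u.

Lemma sq_opnorm_le_block_diag p1 q1 p2 q2
    (E1 : 'M[F]_(p1, q1)) (E2 : 'M[F]_(p2, q2)) c :
  sq_opnorm_le E1 c -> sq_opnorm_le E2 c -> sq_opnorm_le (block_mx E1 0 0 E2) c.
Proof.
move=> E1c E2c u; rewrite -[u]hsubmxK tr_block_mx map_block_mx !trmx0 !raddf0.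
rewrite mul_row_block !mulmx0 addr0 add0r !dotmx_row_mx mulrDr.
exact: lerD.
Qed.
End Adjoint.

Section SingularValues.
Variables (F : numClosedFieldType) (p q : nat) (M : 'M[F]_(p, q)).

Local Notation G := (M ^t* *m M).
Local Notation P := (spectralmx G).
Local Notation d := (spectral_diag G).

Lemma gram_spectral_unitary : P \is unitarymx.
Proof. exact: spectral_unitarymx. Qed.

Lemma gram_spectral : G = P ^t* *m diag_mx d *m P.
Proof.
have G_normal : G \is normalmx.
  by apply/normalmxP; rewrite trmxC_mul trmxCK.
by rewrite -invmx_unitary ?gram_spectral_unitary //; apply/orthomx_spectralP.
Qed.

Lemma dotmx_mul_trmxCE (u : 'rV[F]_q) :
  dotmx (u *m M ^t*) (u *m M ^t*) =
  \sum_i d 0 i * ((u *m P ^t*) 0 i * ((u *m P ^t*) 0 i)^*).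
Proof.
rewrite dotmxE; have -> : u *m M ^t* *m (u *m M ^t*) ^t* =
    (u *m P ^t*) *m diag_mx d *m (u *m P ^t*) ^t*.
  rewrite !trmxC_mul !trmxCK -!mulmxA; congr (u *m _).
  by rewrite !mulmxA -gram_spectral.
rewrite mul_mx_diag mxE; apply: eq_bigr => i _.
by rewrite !mxE mulrAC mulrC.
Qed.

Lemma spectral_diag_ge0 i : 0 <= d 0 i.
Proof.
have := dotmx_ge0 ((delta_mx 0 i *m P) *m M ^t*).
rewrite dotmx_mul_trmxCE mulmxtVK ?gram_spectral_unitary // (bigD1 i) //= big1 ?addr0.
  by rewrite !mxE !eqxx conjC1 !mulr1.
by move=> j ji; rewrite !mxE (negbTE ji) andbF mul0r mulr0.
Qed.

Lemma perm_sq_svals : perm_eq (sq_svals M) [seq d 0 i | i <- enum 'I_q].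
Proof.
rewrite /sq_svals perm_sort; apply: prod_XsubC_eq; rewrite /gram_eigs.
case: closed_field_poly_normal => r /=.
rewrite (monicP (char_poly_monic _)) scale1r => <-.
rewrite -adjmxE [in char_poly _]gram_spectral.
rewrite char_poly_conj ?mul_trmxC_unitary ?gram_spectral_unitary //.
rewrite char_poly_trig ?diag_mx_is_trig //.
by rewrite big_map big_enum; apply: eq_bigr => i _; rewrite mxE eqxx.
Qed.

Lemma size_sq_svals : size (sq_svals M) = q.
Proof. by rewrite (perm_size perm_sq_svals) size_map size_enum_ord. Qed.

Lemma all_sq_svals_ge0 : all [pred x | 0 <= x] (sq_svals M).
Proof.
rewrite (perm_all _ perm_sq_svals); apply/allP => _ /mapP [i _ ->].
exact: spectral_diag_ge0.
Qed.

Lemma sq_sval_ge0 j : 0 <= nth 0 (sq_svals M) j.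
Proof.
have [js|js] := ltnP j (size (sq_svals M)); last by rewrite nth_default.
exact/(allP all_sq_svals_ge0)/mem_nth.
Qed.

Lemma sorted_sq_svals : sorted >=%R (sq_svals M).
Proof.
apply: (@sort_sorted_in _ [pred x | 0 <= x]) => [x y x0 y0|].
  by rewrite orbC; apply: real_leVge; exact: ger0_real.
by move: all_sq_svals_ge0; rewrite (perm_all _ (permEl (perm_sort _ _))).
Qed.

Lemma spectral_diag_le_sq_sval1 i : d 0 i <= nth 0 (sq_svals M) 0.
Proof.
apply: (sorted_ge_le_head 0 sorted_sq_svals).
by rewrite (perm_mem perm_sq_svals) map_f ?mem_enum.
Qed.

Lemma dotmx_spectralE (u : 'rV[F]_q) :
  dotmx u u = \sum_i (u *m P ^t*) 0 i * ((u *m P ^t*) 0 i)^*.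
Proof. by rewrite -dotmx_sum dotmx_unitary ?trmxC_unitary ?gram_spectral_unitary. Qed.

Lemma sq_opnorm_le_sq_sval1 : sq_opnorm_le M (nth 0 (sq_svals M) 0).
Proof.
move=> u; rewrite dotmx_mul_trmxCE dotmx_spectralE mulr_sumr.
apply: ler_sum => i _; apply: ler_wpM2r; first exact: mul_conjC_ge0.
exact: spectral_diag_le_sq_sval1.
Qed.

Lemma sq_opnorm_ge_span (I : pred 'I_q) (mu : F) (u : 'rV[F]_q) :
  {in I, forall i, mu <= d 0 i} -> (forall i, i \notin I -> (u *m P ^t*) 0 i = 0) ->
  mu * dotmx u u <= dotmx (u *m M ^t*) (u *m M ^t*).
Proof.
move=> I_ge u_out; rewrite dotmx_mul_trmxCE dotmx_spectralE mulr_sumr.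
apply: ler_sum => i _; have [iI|iI] := boolP (i \in I).
  by apply: ler_wpM2r; [exact: mul_conjC_ge0 | exact: I_ge].
by rewrite u_out // mul0r !mulr0.
Qed.

Lemma sq_sval_le_of_rank (E : 'M[F]_(p, q)) c k :
  sq_opnorm_le E c -> (\rank (M + E)%R <= k)%N -> (k < q)%N ->
  nth 0 (sq_svals M) k <= c.
Proof.
move=> Ec rk_le k_lt; set mu := nth 0 (sq_svals M) k.
pose I := [pred i | mu <= d 0 i].
have I_big : (k < #|I|)%N.
  rewrite cardE /enum_mem size_filter -enumT -(count_map (fun i => d 0 i) (>= mu)).
  rewrite -(permP perm_sq_svals); apply: (sorted_ge_count_nth 0 sorted_sq_svals).
  by rewrite size_sq_svals.
pose V := rowsub (enum_val : 'I_#|I| -> 'I_q) P.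
have V_unitary : V \is unitarymx.
  exact: rowsub_unitarymx enum_val_inj gram_spectral_unitary.
have : (V :&: kermx ((M + E) ^t*))%MS != 0.
  apply: capmx_neq0; rewrite mxrank_unitary // mxrank_ker mxrank_trmxC.
  by have := rank_leq_col (M + E)%R; lia.
case/rowV0Pn => u uVK u_neq0.
have uK : u *m M ^t* = - (u *m E ^t*).
  move: (submx_trans uVK (capmxSr _ _)) => /sub_kermxP.
  by rewrite !raddfD /= => /eqP; rewrite addr_eq0 => /eqP.
have u_out i : i \notin I -> (u *m P ^t*) 0 i = 0.
  have [w ->] := submxP (submx_trans uVK (capmxSl _ _)).
  move=> iI; rewrite -mulmxA mul_rowsub_mx (unitarymxP gram_spectral_unitary).
  rewrite mxE big1 // => j _.
  rewrite !mxE; case: eqP => [fji|]; last by rewrite mulr0.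
  by move: (enum_valP j); rewrite fji (negbTE iI).
have := sq_opnorm_ge_span (I := I) (mu := mu) (fun i iI => iI) u_out.
rewrite uK dotmxN => /le_trans /(_ (Ec u)).
by rewrite ler_pM2r // dotmx_gt0.
Qed.
End SingularValues.

Theorem mainTheorem3 (R : realType) (n m : nat) (A : 'M[R[i]]_n) (B : 'M[R[i]]_(n, m))
  (C : 'M[R[i]]_(m, n)) (D : 'M[R[i]]_m) (l1 l2 l3 : R[i]) (X : 'M[R[i]]_m) :
  (3 <= m)%N ->
  l1 != l2 -> l1 != l3 -> l2 != l3 ->
  ~~ eigenvalue A l1 -> ~~ eigenvalue A l2 -> ~~ eigenvalue A l3 ->
  eigenvalue (block_mx A B C X) l1 ->
  eigenvalue (block_mx A B C X) l2 ->
  eigenvalue (block_mx A B C X) l3 ->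
  forall g12 g13 g23 : R[i],
    sval_j (3 * m - 2) (S3 A B C D l1 l2 l3 g12 g13 g23) <= spec_norm (X - D).
Proof.
move=> m_ge3 l12 l13 l23 nA1 nA2 nA3 eK1 eK2 eK3 g12 g13 g23.
have rk_le := S3_rank_le g12 g13 g23 l12 l13 l23 nA1 nA2 nA3 eK1 eK2 eK3.
rewrite (S3_shift A B C D) in rk_le.
have E_le := sq_opnorm_le_sq_sval1 (X - D).
have := sq_sval_le_of_rank (sq_opnorm_le_block_diag E_le
  (sq_opnorm_le_block_diag E_le E_le)) rk_le.
rewrite /spec_norm /sval_j ler_sqrtC ?nnegrE ?sq_sval_ge0 //.
have -> : (3 * m - 2).-1 = (3 * m - 3)%N by rewrite -subn1; lia.
by apply; lia.
Qed.
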